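(* Fix subgroups $s\neq s'$ in $\mathcal S$, a cohort $g\in\{1,\dots,\mathcal T\}$ and a period $t$ with $g\le t\le\mathcal T$. Assume $\mathbb E|Y_\tau(g';\sigma)|<\infty$ for all $\tau,g',\sigma$, and that $P(G=g,S=\sigma)>0$ for $\sigma\in\{s,s'\}$. (a) (Not-yet-treated comparison.) Suppose $P(G>t,S=\sigma)>0$ for $\sigma\in\{s,s'\}$, and: (i) (No anticipation) for every finite cohort $g'$, every $\tau<g'$ and every $\sigma\in\mathcal S$ with $P(G=g',S=\sigma)>0$: $\mathbb E[Y_\tau(g')\mid G=g',S=\sigma]=\mathbb E[Y_\tau(\infty)\mid G=g',S=\sigma]$; (ii) (Parallel gaps, not-yet-treated) $$\mathbb E[Y_t(\infty)-Y_{g-1}(\infty)\mid G=g,S=s]-\mathbb E[Y_t(\infty)-Y_{g-1}(\infty)\mid G=g,S=s']$$ $$=\mathbb E[Y_t(\infty)-Y_{g-1}(\infty)\mid G>t,S=s]-\mathbb E[Y_t(\infty)-Y_{g-1}(\infty)\mid G>t,S=s'].$$ Then $$DATT_{s-s'}(g,t)=\mathbb E[Y_t-Y_{g-1}\mid G=g,S=s]-\mathbb E[Y_t-Y_{g-1}\mid G=g,S=s']-\Big(\mathbb E[Y_t-Y_{g-1}\mid G>t,S=s]-\mathbb E[Y_t-Y_{g-1}\mid G>t,S=s']\Big).$$ (b) (Never-treated comparison.) Suppose $P(G=\infty,S=\sigma)>0$ for $\sigma\in\{s,s'\}$, that (i) holds, and that (ii) holds with the events $\{G>t\}$ replaced by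 $\{G=\infty\}$. Then the same formula holds with $\{G>t\}$ replaced by $\{G=\infty\}$ in the last two conditional expectations.
   Context: Time periods are $t=0,1,\dots,\mathcal T$; $\mathcal S$ is a finite set of subgroups. A unit is described by a random element consisting of: $G\in\{1,\dots,\mathcal T\}\cup\{\infty\}$, the first period in which the unit is treated ($G=\infty$ means never treated; treatment is irreversible, $W_t=\mathbf 1\{G\le t\}$); a subgroup $S\in\mathcal S$; covariates $X$; and real potential outcomes $Y_t(g';\sigma)$ for every period $t$, every possible cohort $g'$ (including $\infty$) and every $\sigma\in\mathcal S$, interpreted as the outcome at $t$ had the unit first been treated at $g'$ and belonged to subgroup $\sigma$. Write $Y_t(g'):=Y_t(g';S)$ and the observed outcome $Y_t:=Y_t(G;S)$. Units are i.i.d. draws (panel data: all $Y_0,\dots,Y_{\mathcal T}$ observed for each unit). The not-yet-treated units at period $t$ are those with $G>t$ (this includes $G=\infty$). Define $$DATT_{s-s'}(g,t):=\mathbb E[Y_t(g)-Y_t(\infty)\mid G=g,S=s]-\mathbb E[Y_t(g)-Y_t(\infty)\mid G=g,S=s'].$$ *)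

From HB Require Import structures.
From mathcomp Require Import all_boot all_order all_algebra.
From mathcomp Require Import all_classical all_reals all_analysis.
Set Implicit Arguments. Unset Strict Implicit. Unset Printing Implicit Defensive.
Import Order.TTheory GRing.Theory Num.Theory.
Local Open Scope classical_set_scope.
Local Open Scope ring_scope.

(* Cohorts: [Some g] = first treated in period g, [None] = never treated (G = oo). *)
Notation cohort := (option nat).

Definition cohort_gt (t : nat) (c : cohort) : bool :=
  if c is Some k then (t < k)%N else true.

Definition condE {d} {T : measurableType d} {R : realType}
  (P : probability T R) (A : set T) (X : T -> R) : R :=
  Rintegral P A X / fine (P A).

From HB Require Import structures.
From mathcomp Require Import all_boot all_order all_algebra.
From mathcomp Require Import all_classical all_reals all_analysis.
From mathcomp Require Import measurable_realfun ring lra zify.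
Set Implicit Arguments. Unset Strict Implicit. Unset Printing Implicit Defensive.
Import Order.TTheory GRing.Theory Num.Theory.
Local Open Scope classical_set_scope.
Local Open Scope ring_scope.

(* Write the observed gap Y_t - Y_{g-1} as the untreated gap Y_t(oo) - Y_{g-1}(oo)
   plus the difference of the two.  On the treated cell {G = g, S = sig} that
   difference is (Y_t(g) - Y_t(oo)) - (Y_{g-1}(g) - Y_{g-1}(oo)), and no
   anticipation kills the mean of the second term, so the observed gap recovers
   the untreated gap plus the ATT.  On a comparison cell {G = k, S = sig} with
   k > t both periods g - 1 and t precede treatment, so by no anticipation the
   observed and untreated gaps have equal integrals; {G > t} is the disjoint
   union of the finitely many such cells (cohorts in (t, T] and oo), hence the
   comparison means coincide too.  The parallel-gaps assumption then cancels
   the untreated gaps in the difference between s and s'. *)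

Section Rintegral_facts.
Context d (T : measurableType d) (R : realType) (mu : {measure set T -> \bar R}).

Lemma measurable_fun_bigsetU (I : eqType) (F : I -> set T) (f : T -> \bar R)
    (s : seq I) :
  (forall i, measurable (F i)) -> (forall i, i \in s -> measurable_fun (F i) f) ->
  measurable_fun (\big[setU/set0]_(i <- s) F i) f.
Proof.
move=> mF; elim: s => [|i s IHs] mfs.
  by rewrite big_nil; exact: measurable_fun_set0.
rewrite big_cons; apply/measurable_funU; [exact: mF|exact: bigsetU_measurable|].
split; first by apply: mfs; rewrite mem_head.
by apply: IHs => j js; apply: mfs; rewrite inE js orbT.
Qed.

Lemma Rintegral_bigsetU (I : eqType) (F : I -> set T) (f : T -> R) (s : seq I) :
  (forall i, measurable (F i)) -> uniq s -> trivIset [set` s] F ->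
  (forall i, i \in s -> mu.-integrable (F i) (EFin \o f)) ->
  \int[mu]_(x in \big[setU/set0]_(i <- s) F i) f x =
  \sum_(i <- s) \int[mu]_(x in F i) f x.
Proof.
move=> mF us tF intF.
have mf : measurable_fun (\big[setU/set0]_(i <- s) F i) (EFin \o f).
  apply: measurable_fun_bigsetU => // i si.
  by have /integrableP[] := intF i si.
rewrite /Rintegral integral_bigsetU_EFin // !big_seq sum_fine //.
by move=> i si; apply: integrable_fin_num; [exact: mF|exact: intF].
Qed.

Lemma integrable_EFinB (A : set T) (f h : T -> R) : measurable A ->
  mu.-integrable A (EFin \o f) -> mu.-integrable A (EFin \o h) ->
  mu.-integrable A (EFin \o fun x => f x - h x).
Proof. by move=> mA if_ ih; apply: (eq_integrable mA _ _ _ (integrableB mA if_ ih)). Qed.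

End Rintegral_facts.

Section conditional_expectation.
Context d (T : measurableType d) (R : realType) (P : probability T R).

Lemma eq_condE (A : set T) (f h : T -> R) :
  {in A, f =1 h} -> condE P A f = condE P A h.
Proof. by move=> fh; rewrite /condE (eq_Rintegral _ fh). Qed.

Lemma Rintegral_eq_of_condE (A : set T) (f h : T -> R) : measurable A ->
  P.-integrable A (EFin \o f) -> P.-integrable A (EFin \o h) ->
  ((0 < P A)%E -> condE P A f = condE P A h) ->
  \int[P]_(x in A) f x = \int[P]_(x in A) h x.
Proof.
move=> mA if_ ih fh; have [PA0|PA_neq0] := eqVneq (P A) 0%E.
  rewrite /Rintegral !null_set_integral //.
  - exact: measurable_int ih.
  - exact: measurable_int if_.
have PA_gt0 : (0 < P A)%E by rewrite lt0e PA_neq0 measure_ge0.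
have PA_fine_neq0 : fine (P A) != 0.
  rewrite gt_eqF // fine_gt0 // PA_gt0 /=.
  exact: le_lt_trans (probability_le1 P mA) (ltry _).
move: (fh PA_gt0); rewrite /condE => /(congr1 ( *%R^~ (fine (P A)))).
by rewrite /= !divfK.
Qed.

End conditional_expectation.

Section staggered_adoption.
Context (R : realType) d (Omega : measurableType d) (P : probability Omega R)
  (Sg : Type) (G : Omega -> cohort) (S : Omega -> Sg)
  (Y : nat -> cohort -> Sg -> Omega -> R).

Definition cell (c : cohort) (sig : Sg) : set Omega :=
  [set w | G w = c /\ S w = sig].

Hypothesis measurable_cell : forall c sig, measurable (cell c sig).
Hypothesis integrable_Y : forall tau c sig,
  P.-integrable setT (fun w => (Y tau c sig w)%:E).
Variable Tm : nat.
Hypothesis cohort_range :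
  forall w, match G w with Some k => (1 <= k <= Tm)%N | None => true end.

Lemma integrable_Y_on (A : set Omega) tau c sig : measurable A ->
  P.-integrable A (EFin \o Y tau c sig).
Proof. by move=> mA; apply: integrableS (integrable_Y tau c sig). Qed.

Lemma integrable_cell_potential tau c c' sig :
  P.-integrable (cell c' sig) (EFin \o fun w => Y tau c (S w) w).
Proof.
have mcell := measurable_cell c' sig.
apply: (eq_integrable mcell _ _ _ (integrable_Y_on tau c sig mcell)).
by move=> w /set_mem [_ Sw] /=; rewrite Sw.
Qed.

Lemma integrable_cell_observed tau c sig :
  P.-integrable (cell c sig) (EFin \o fun w => Y tau (G w) (S w) w).
Proof.
have mcell := measurable_cell c sig.
apply: (eq_integrable mcell _ _ _ (integrable_Y_on tau c sig mcell)).
by move=> w /set_mem [Gw Sw] /=; rewrite Gw Sw.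
Qed.

Lemma trivIset_cell (A : set cohort) sig : trivIset A (cell ^~ sig).
Proof.
apply/trivIsetP => c c' _ _ cc'; apply/seteqP; split => w // [[Gw _] [Gw' _]].
by move: cc'; rewrite -Gw -Gw' eqxx.
Qed.

Lemma cohort_range_of_cell_gt0 k sig :
  (0 < P (cell (Some k) sig))%E -> (1 <= k <= Tm)%N.
Proof.
have [[w [Gw _]] _|cell_empty] := pselect (exists w, cell (Some k) sig w).
  by move: (cohort_range w); rewrite Gw.
suff -> : cell (Some k) sig = set0 by rewrite measure0 ltxx.
by apply/seteqP; split => // w cw; apply: cell_empty; exists w.
Qed.

Lemma cell_not_yet_treated t sig :
  [set w | cohort_gt t (G w) /\ S w = sig] =
  \big[setU/set0]_(c <- None :: map Some (iota t.+1 (Tm - t))) cell c sig.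
Proof.
rewrite -bigcup_seq; apply/seteqP; split => [w [Gt Sw]|w [c cs [Gw Sw]]].
  exists (G w) => //; move: (cohort_range w) Gt; case: (G w) => [k /= k_le t_k|_ _].
    by rewrite inE /= mem_map ?mem_iota; [lia|exact: Some_inj].
  exact: mem_head.
split => //; rewrite Gw; move: cs => /=; rewrite in_cons => /predU1P[-> //|/mapP[k]].
by rewrite mem_iota => k_in ->; rewrite /=; lia.
Qed.

Lemma condE_gap_never_treated t0 t1 sig :
  condE P (cell None sig) (fun w => Y t1 (G w) (S w) w - Y t0 (G w) (S w) w) =
  condE P (cell None sig) (fun w => Y t1 None (S w) w - Y t0 None (S w) w).
Proof. by apply: eq_condE => w /set_mem [-> _]. Qed.

Section no_anticipation.
Hypothesis no_anticipation : forall k tau sig, (tau < k)%N ->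
  (0 < P (cell (Some k) sig))%E ->
  condE P (cell (Some k) sig) (fun w => Y tau (Some k) (S w) w) =
  condE P (cell (Some k) sig) (fun w => Y tau None (S w) w).

Lemma Rintegral_cell_no_anticipation k tau sig : (tau < k)%N ->
  \int[P]_(w in cell (Some k) sig) Y tau (Some k) sig w =
  \int[P]_(w in cell (Some k) sig) Y tau None sig w.
Proof.
move=> tau_k.
have on_cell c : {in cell (Some k) sig, (fun w => Y tau c (S w) w) =1 Y tau c sig}.
  by move=> w /set_mem [_ Sw] /=; rewrite Sw.
rewrite -!(eq_Rintegral _ (on_cell _)).
apply: Rintegral_eq_of_condE; first exact: measurable_cell (Some k) sig.
- exact: integrable_cell_potential.
- exact: integrable_cell_potential.
- exact: no_anticipation.
Qed.

Lemma Rintegral_cell_gap t0 t1 c sig : (t0 <= t1)%N -> cohort_gt t1 c ->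
  \int[P]_(w in cell c sig) (Y t1 (G w) (S w) w - Y t0 (G w) (S w) w) =
  \int[P]_(w in cell c sig) (Y t1 None (S w) w - Y t0 None (S w) w).
Proof.
move=> t0_t1 t1_c.
rewrite (eq_Rintegral _ (g := fun w => Y t1 c sig w - Y t0 c sig w));
  last by move=> w /set_mem [-> ->].
rewrite [RHS](eq_Rintegral _ (g := fun w => Y t1 None sig w - Y t0 None sig w));
  last by move=> w /set_mem [_ ->].
case: c t1_c => [k /= t1_k|//]; have mcell := measurable_cell (Some k) sig.
rewrite !RintegralB ?integrable_Y_on // !Rintegral_cell_no_anticipation //.
exact: leq_ltn_trans t0_t1 t1_k.
Qed.

Lemma condE_gap_comparison t0 t1 sig (cs : seq cohort) :
  (t0 <= t1)%N -> uniq cs -> all (cohort_gt t1) cs ->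
  condE P (\big[setU/set0]_(c <- cs) cell c sig)
    (fun w => Y t1 (G w) (S w) w - Y t0 (G w) (S w) w) =
  condE P (\big[setU/set0]_(c <- cs) cell c sig)
    (fun w => Y t1 None (S w) w - Y t0 None (S w) w).
Proof.
move=> t0_t1 uniq_cs gt_cs; rewrite /condE; congr (_ / _).
have mcell c : measurable (cell c sig) := measurable_cell c sig.
have disj_cells : trivIset [set` cs] (cell ^~ sig) by exact: trivIset_cell.
rewrite !Rintegral_bigsetU //.
- by apply: eq_big_seq => c /(allP gt_cs); exact: Rintegral_cell_gap.
- by move=> c _; apply: integrable_EFinB; rewrite ?integrable_cell_potential.
- by move=> c _; apply: integrable_EFinB; rewrite ?integrable_cell_observed.
Qed.

Lemma condE_gap_not_yet_treated t0 t1 sig : (t0 <= t1)%N ->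
  condE P [set w | cohort_gt t1 (G w) /\ S w = sig]
    (fun w => Y t1 (G w) (S w) w - Y t0 (G w) (S w) w) =
  condE P [set w | cohort_gt t1 (G w) /\ S w = sig]
    (fun w => Y t1 None (S w) w - Y t0 None (S w) w).
Proof.
move=> t0_t1; rewrite (cell_not_yet_treated t1).
apply: condE_gap_comparison => //=.
  by rewrite (map_inj_uniq Some_inj) iota_uniq andbT; apply/mapP => -[].
by rewrite all_map; apply/allP => k; rewrite mem_iota /=; lia.
Qed.

Lemma condE_gap_treated t0 t g sig : (t0 < g)%N ->
  condE P (cell (Some g) sig) (fun w => Y t (G w) (S w) w - Y t0 (G w) (S w) w) -
  condE P (cell (Some g) sig) (fun w => Y t None (S w) w - Y t0 None (S w) w) =
  condE P (cell (Some g) sig) (fun w => Y t (Some g) (S w) w - Y t None (S w) w).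
Proof.
move=> t0_g; have mcell := measurable_cell (Some g) sig.
have no_pre_effect :
    \int[P]_(w in cell (Some g) sig) (Y t0 (Some g) sig w - Y t0 None sig w) = 0.
  by rewrite RintegralB ?integrable_Y_on // Rintegral_cell_no_anticipation // subrr.
rewrite /condE -mulrBl; congr (_ / _).
rewrite -RintegralB //; first last.
- by apply: integrable_EFinB; rewrite ?integrable_cell_potential.
- by apply: integrable_EFinB; rewrite ?integrable_cell_observed.
rewrite (eq_Rintegral _ (g := fun w => (Y t (Some g) sig w - Y t None sig w) -
  (Y t0 (Some g) sig w - Y t0 None sig w)));
  last by move=> w /set_mem [-> ->]; ring.
rewrite [RHS](eq_Rintegral _ (g := fun w => Y t (Some g) sig w - Y t None sig w));
  last by move=> w /set_mem [_ ->].
rewrite RintegralB ?no_pre_effect ?subr0 //.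
all: by apply: integrable_EFinB; rewrite ?integrable_Y_on.
Qed.

End no_anticipation.
End staggered_adoption.

Theorem proposition1
  (R : realType) (d : measure_display) (Omega : measurableType d)
  (P : probability Omega R)
  (Tm : nat) (Sg : finType)
  (G : Omega -> cohort) (S : Omega -> Sg)
  (Y : nat -> cohort -> Sg -> Omega -> R)
  (hG : forall w, match G w with Some k => (1 <= k <= Tm)%N | None => true end)
  (hmeas : forall (c : cohort) (sig : Sg),
      measurable [set w | G w = c /\ S w = sig])
  (hint : forall (tau : nat) (c : cohort) (sig : Sg),
      P.-integrable setT (fun w => (Y tau c sig w)%:E))
  (s s' : Sg) (hss' : s != s')
  (g t : nat) (hg : (1 <= g <= Tm)%N) (hgt : (g <= t <= Tm)%N)
  (hpos : forall sig, sig = s \/ sig = s' ->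
      (0 < P [set w | G w = Some g /\ S w = sig])%E) :
  let Ypot := fun (tau : nat) (c : cohort) (w : Omega) => Y tau c (S w) w in
  let Yobs := fun (tau : nat) (w : Omega) => Y tau (G w) (S w) w in
  let NA := forall (g' : nat) (tau : nat) (sig : Sg),
      (1 <= g' <= Tm)%N -> (tau < g')%N ->
      (0 < P [set w | G w = Some g' /\ S w = sig])%E ->
      condE P [set w | G w = Some g' /\ S w = sig] (Ypot tau (Some g')) =
      condE P [set w | G w = Some g' /\ S w = sig] (Ypot tau None) in
  let evG := fun sig => [set w | G w = Some g /\ S w = sig] in
  let DATT :=
      condE P (evG s) (fun w => Ypot t (Some g) w - Ypot t None w)
    - condE P (evG s') (fun w => Ypot t (Some g) w - Ypot t None w) in
  let gap0 := fun w => Ypot t None w - Ypot (g - 1)%N None w in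
  let gapO := fun w => Yobs t w - Yobs (g - 1)%N w in
  (* (a) not-yet-treated comparison group *)
  (let evC := fun sig => [set w | cohort_gt t (G w) /\ S w = sig] in
   (forall sig, sig = s \/ sig = s' -> (0 < P (evC sig))%E) ->
   NA ->
   condE P (evG s) gap0 - condE P (evG s') gap0 =
     condE P (evC s) gap0 - condE P (evC s') gap0 ->
   DATT = condE P (evG s) gapO - condE P (evG s') gapO
          - (condE P (evC s) gapO - condE P (evC s') gapO))
  /\
  (* (b) never-treated comparison group *)
  (let evC := fun sig => [set w | G w = None /\ S w = sig] in
   (forall sig, sig = s \/ sig = s' -> (0 < P (evC sig))%E) ->
   NA ->
   condE P (evG s) gap0 - condE P (evG s') gap0 =
     condE P (evC s) gap0 - condE P (evC s') gap0 ->
   DATT = condE P (evG s) gapO - condE P (evG s') gapO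
          - (condE P (evC s) gapO - condE P (evC s') gapO)).
Proof.
move=> Ypot Yobs NA evG DATT gap0 gapO.
have [g_le_t _] := andP hgt.
have g1_lt_g : (g - 1 < g)%N by case/andP: hg; lia.
have g1_le_t : (g - 1 <= t)%N by lia.
have NA_cells : NA -> forall k tau sig, (tau < k)%N ->
    (0 < P (cell G S (Some k) sig))%E ->
    condE P (cell G S (Some k) sig) (Ypot tau (Some k)) =
    condE P (cell G S (Some k) sig) (Ypot tau None).
  move=> hNA k tau sig tau_k Pk; apply: hNA => //.
  exact: (cohort_range_of_cell_gt0 (G := G) hG Pk).
have DiD (evC : Sg -> set Omega) : NA ->
    (forall sig, condE P (evC sig) gapO = condE P (evC sig) gap0) ->
    condE P (evG s) gap0 - condE P (evG s') gap0 =
      condE P (evC s) gap0 - condE P (evC s') gap0 ->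
    DATT = condE P (evG s) gapO - condE P (evG s') gapO
           - (condE P (evC s) gapO - condE P (evC s') gapO).
  move=> hNA comparison parallel.
  rewrite /DATT -!(condE_gap_treated hmeas hint (NA_cells hNA) _ _ g1_lt_g) !comparison.
  lra.
split=> evC _ hNA parallel; apply: DiD => // sig.
  exact: (condE_gap_not_yet_treated hmeas hint hG (NA_cells hNA)).
exact: condE_gap_never_treated.
Qed.
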